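(* Let $(\Lambda,Y)$ be an extensible graph with parameters $(t,s,\bar s)$ with $t=1$, let $y\in Y$, $Y_1=\Lambda(y,1)$, $Y_2=\Lambda(y,2)$, and $\Lambda_1,\Lambda_2$ the graphs induced by $\Lambda$ on $Y_1,Y_2$. Then: (1) The edges of $\Lambda_1$ form a partition of $Y_1$ into $s$ edges $\alpha_1=\{a'_1,a''_1\},\dots,\alpha_s=\{a'_s,a''_s\}$. (2) Letting $A'_i$ (resp. $A''_i$) be the set of points of $Y_2$ adjacent to $a'_i$ (resp. $a''_i$), for each $i$ the pair $\{A'_i,A''_i\}$ is a partition of $Y_2$ into two subsets of cardinality $\bar s=2(s-1)$. (3) $\Lambda_2$ contains no triangle. (4) Every edge of $\Lambda_2$ is contained in exactly one of the sets $A'_1,A''_1,\dots,A'_s,A''_s$, and the edges of $\Lambda_2$ contained in each of these sets form a partition of it into $s-1$ edges. (5) If $\alpha'$ and $\alpha''$ are edges of $\Lambda_2$ contained in $A'_i$ and $A''_i$ respectively, there exist uniquely determined edges $\beta',\beta''$ of $\Lambda_2$ such that $\alpha',\alpha'',\beta',\beta''$ form a square (a $4$-cycle); moreover there is a unique index $j$ such that one of $\beta',\beta''$ is contained in $A'_j$ and the other in $A''_j$.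
   Context: A finite simple graph $(\Lambda,Y)$ is extensible with parameters $(t,s,\bar s)$ (nonnegative integers) if: (1) $\Lambda$ has diameter $2$; (2) for every $y\in Y$, with $\Lambda(y,d)$ the set of vertices at distance $d$ from $y$: (a) $|\Lambda(y,1)|=2s$; (b) $|\Lambda(y,2)|=2\bar s$; (c) every $z\in\Lambda(y,1)$ is adjacent to exactly $\bar s$ points of $\Lambda(y,2)$ and exactly $t=2s-\bar s-1$ points of $\Lambda(y,1)$; (d) every $z\in\Lambda(y,2)$ is adjacent to exactly $s$ points of $\Lambda(y,2)$ and exactly $s$ points of $\Lambda(y,1)$; (3) every edge lies in exactly $t$ triangles; (4) $|Y|=1+2s+2\bar s$. *)

From mathcomp Require Import all_boot.
Set Implicit Arguments. Unset Strict Implicit. Unset Printing Implicit Defensive.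

Section Graph.
Variables (T : finType) (e : rel T).

Definition simple_graph : Prop := symmetric e /\ irreflexive e.

Definition nbh1 (y : T) : {set T} := [set z | e y z].
Definition nbh2 (y : T) : {set T} :=
  [set z | (z != y) && ~~ e y z && [exists w, e y w && e w z]].

Definition diameter2 : Prop :=
  (forall x z : T, x != z -> ~~ e x z -> exists w, e x w /\ e w z) /\
  (exists x z : T, x != z /\ ~~ e x z).

Definition extensible (t s sbar : nat) : Prop :=
  [/\ simple_graph,
      diameter2,
      t + sbar + 1 = 2 * s &
   [/\
      (forall y : T,
        [/\ #|nbh1 y| = 2 * s,
            #|nbh2 y| = 2 * sbar,
            (forall z, z \in nbh1 y ->
               #|[set w in nbh2 y | e z w]| = sbar /\
               #|[set w in nbh1 y | e z w]| = t) &
            (forall z, z \in nbh2 y ->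
               #|[set w in nbh2 y | e z w]| = s /\
               #|[set w in nbh1 y | e z w]| = s)]),
      (forall x z : T, e x z -> #|[set w | e x w && e z w]| = t) &
      #|T| = 1 + 2 * s + 2 * sbar]].

Definition edges_in (S : {set T}) : {set {set T}} :=
  [set E : {set T} | [exists u, exists v,
     [&& u \in S, v \in S, e u v & E == [set u; v]]]].

Definition square (Q : {set {set T}}) : Prop :=
  exists x1 x2 x3 x4 : T,
    [/\ uniq [:: x1; x2; x3; x4],
        [&& e x1 x2, e x2 x3, e x3 x4 & e x4 x1] &
        Q = [set [set x1; x2]; [set x2; x3]; [set x3; x4]; [set x4; x1]]].

End Graph.

From mathcomp Require Import all_boot zify.
Set Implicit Arguments. Unset Strict Implicit. Unset Printing Implicit Defensive.

(* Since t = 1, every edge lies in exactly one triangle: two adjacent vertices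
   have exactly one common neighbour.  A vertex of Y1 then has a unique
   neighbour in Y1, so Lambda_1 is a perfect matching, and the ends a'_i, a''_i
   of a matching edge have y as their only common neighbour, so A'_i and A''_i
   are disjoint; counting degrees they cover Y2.  The neighbours of u in A'_i
   are the common neighbours of u and a'_i, so each block A'_i, A''_i carries a
   perfect matching.  Picking for every i the block containing u yields s
   distinct neighbours of u in Y2, i.e. all of them: every edge of Lambda_2
   lies in a block, in only one, and spans no triangle of Lambda_2.  Finally
   u in A'_i has s - 1 neighbours in A''_i, no two of them matched, so u is
   adjacent to exactly one end of each of the s - 1 matching edges of A''_i;
   this pins down the square through an edge of A'_i and an edge of A''_i. *)

Lemma card_set4 (T : finType) (a b c d : T) :
  uniq [:: a; b; c; d] -> #|[set a; b; c; d]| = 4.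
Proof.
move=> U; rewrite -[4]/(size [:: a; b; c; d]) -(card_uniqP U).
by apply: eq_card => x; rewrite !inE !orbA.
Qed.

Lemma card_cycle_edges (T : finType) (x1 x2 x3 x4 : T) :
  uniq [:: x1; x2; x3; x4] ->
  #|[set [set x1; x2]; [set x2; x3]; [set x3; x4]; [set x4; x1]]| = 4.
Proof.
have neq (a b c d : T) : ~~ ([set a; b] \subset [set c; d]) -> [set a; b] != [set c; d].
  by apply: contra => /eqP->.
rewrite /= !inE !negb_or => /and4P[/and3P[n12 n13 n14] /andP[n23 n24] n34 _].
apply: card_set4; rewrite /= !inE !negb_or !neq //=;
  rewrite subUset !sub1set !inE ?(eq_sym x2 x1) ?(eq_sym x3 x1) ?(eq_sym x4 x1)
    ?(eq_sym x3 x2) ?(eq_sym x4 x2) ?(eq_sym x4 x3).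
all: by rewrite ?(negbTE n12) ?(negbTE n13) ?(negbTE n14) ?(negbTE n23)
  ?(negbTE n24) ?(negbTE n34) ?andbF.
Qed.

Section SimpleGraph.
Variables (T : finType) (e : rel T).
Hypotheses (e_sym : symmetric e) (e_irr : irreflexive e).

Lemma edges_inP (S E : {set T}) :
  reflect (exists u v, [/\ u \in S, v \in S, e u v & E = [set u; v]])
          (E \in edges_in e S).
Proof.
rewrite inE; apply: (iffP existsP) => [[u /existsP[v /and4P[uS vS uv /eqP->]]]|].
  by exists u, v.
by case=> u [v [uS vS uv ->]]; exists u; apply/existsP; exists v; rewrite uS vS uv eqxx.
Qed.

Lemma adj_neq u v : e u v -> u != v.
Proof. by apply: contraTneq => ->; rewrite e_irr. Qed.

Lemma pair_edges_in (S : {set T}) (a b : T) :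
  ([set a; b] \in edges_in e S) = [&& a \in S, b \in S & e a b].
Proof.
apply/edges_inP/and3P => [[u [v [uS vS uv E]]]|[aS bS ab]]; last by exists a, b.
have : u \in [set a; b] by rewrite E setU11.
have : v \in [set a; b] by rewrite E !inE eqxx orbT.
rewrite !inE => /orP[]/eqP vE /orP[]/eqP uE; subst u v; rewrite ?e_irr // in uv.
by rewrite e_sym.
Qed.

Section PerfectMatching.
Variable S : {set T}.
Hypothesis deg1 : forall z, z \in S -> #|[set w in S | e z w]| = 1.

Definition partner (z : T) : T := odflt z [pick w in S | e z w].

Lemma partnerP z : z \in S -> partner z \in S /\ e z (partner z).
Proof.
move=> zS; rewrite /partner; case: pickP => [w /andP[] //| none].
have := deg1 zS; rewrite (_ : [set w in S | e z w] = set0) ?cards0 //.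
by apply/setP=> w; rewrite !inE none.
Qed.

Lemma partner_uniq z w : z \in S -> w \in S -> e z w -> w = partner z.
Proof.
move=> zS wS zw; have [pS zp] := partnerP zS.
by apply: (card_le1_eqP (eq_leq (deg1 zS))); rewrite inE ?wS ?pS.
Qed.

Lemma partnerK z : z \in S -> partner (partner z) = z.
Proof.
move=> zS; have [pS zp] := partnerP zS.
by apply/esym/partner_uniq; rewrite // e_sym.
Qed.

Lemma edges_in_partner E z :
  E \in edges_in e S -> z \in E -> z \in S /\ E = [set z; partner z].
Proof.
case/edges_inP=> u [v [uS vS uv ->]]; rewrite !inE => /orP[]/eqP->.
  by rewrite -(partner_uniq uS vS uv).
by rewrite setUC -(partner_uniq vS uS) // e_sym.
Qed.

Lemma matching_partition : partition (edges_in e S) S.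
Proof.
apply/and3P; split.
- apply/eqP/setP=> z; apply/bigcupP/idP => [[E EP zE]|zS].
    by case: (edges_in_partner EP zE).
  have [pS zp] := partnerP zS.
  by exists [set z; partner z]; rewrite ?setU11 // pair_edges_in zS pS.
- apply/trivIsetP=> A B AP BP; apply: contraR => /pred0Pn[z /andP[zA zB]].
  have [_ ->] := edges_in_partner AP zA; have [_ ->] := edges_in_partner BP zB.
  by [].
- by apply/negP=> /edges_inP[u [v [_ _ _ /setP/(_ u)]]]; rewrite !inE eqxx.
Qed.

Lemma card_matching : #|S| = 2 * #|edges_in e S|.
Proof.
rewrite mulnC; apply: card_uniform_partition matching_partition => E EP.
have [z zE] : exists z, z \in E.
  by case/edges_inP: EP => u [v [_ _ _ ->]]; exists u; rewrite setU11.
have [zS ->] := edges_in_partner EP zE; have [_ zp] := partnerP zS.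
by rewrite cards2 (contraTneq _ zp) // => <-; rewrite e_irr.
Qed.

Lemma transversal_partner (X : {set T}) :
  X \subset S -> #|S| = 2 * #|X| -> {in X, forall z, partner z \notin X} ->
  {in S, forall z, (partner z \in X) = (z \notin X)}.
Proof.
move=> XS cardX indep z zS.
have pXD : partner @: X = S :\: X.
  apply/eqP; rewrite eqEcard; apply/andP; split.
    apply/subsetP=> _ /imsetP[x xX ->].
    by rewrite in_setD (indep x xX); case: (partnerP (subsetP XS x xX)).
  rewrite card_in_imset => [|a b aX bX pab].
    by rewrite cardsD (setIidPr XS); lia.
  by rewrite -(partnerK (subsetP XS a aX)) pab partnerK // (subsetP XS).
case: (boolP (z \in X)) => [zX | zX]; first exact/negbTE/indep.
have : z \in partner @: X by rewrite pXD in_setD zX.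
by case/imsetP=> x xX ->; rewrite partnerK // (subsetP XS).
Qed.

End PerfectMatching.

Lemma square_completed (u1 u2 v1 v2 : T) : uniq [:: u1; u2; v2; v1] ->
  e u1 u2 -> e u2 v2 -> e v1 v2 -> e u1 v1 ->
  square e ([set u1; u2] |: ([set v1; v2] |: [set [set u1; v1]; [set u2; v2]])).
Proof.
move=> U u12 u2v2 v12 u1v1; exists u1, u2, v2, v1; split=> //.
  by rewrite u12 u2v2 e_sym v12 e_sym u1v1.
rewrite (setUC [set v2]) (setUC [set v1] [set u1]).
apply/setP=> E; rewrite !inE.
by case: (E == [set u1; u2]); case: (E == [set v1; v2]);
  case: (E == [set u1; v1]); case: (E == [set u2; v2]); rewrite ?orbT.
Qed.

Lemma square_completed_unique (S : {set T}) (u1 u2 v1 v2 : T)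
    (Bt : {set {set T}}) :
  uniq [:: u1; u2; v2; v1] -> ~~ e u1 v2 -> ~~ e u2 v1 ->
  Bt \subset edges_in e S -> #|Bt| = 2 ->
  square e ([set u1; u2] |: ([set v1; v2] |: Bt)) ->
  Bt = [set [set u1; v1]; [set u2; v2]].
Proof.
(* The square has vertex set {u1, u2, v1, v2}, and the only edges among these
   besides {u1, u2} and {v1, v2} are {u1, v1} and {u2, v2}. *)
move=> U n12 n21 BtE Btc.
set Q := [set u1; u2] |: _ => [[x1 [x2 [x3 [x4 [Ux _ QE]]]]]].
have : #|Q| = 4 by rewrite QE card_cycle_edges.
rewrite /Q !cardsU1 Btc.
case: (boolP (_ \in _ |: _)) => // u12Q; case: (boolP (_ \in Bt)) => // v12Bt _.
have QX E : E \in Q -> E \subset [set x1; x2; x3; x4].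
  by rewrite QE !inE -!orbA => /or4P[]/eqP->; rewrite subUset !sub1set !inE !eqxx ?orbT.
have XE : [set x1; x2; x3; x4] = [set u1; u2; v1; v2].
  apply/esym/eqP; rewrite eqEcard card_set4 // card_set4; last first.
    move: U; rewrite /= !inE !negb_or.
    by case/and4P=> /and3P[-> -> ->] /andP[-> ->] v21; rewrite eq_sym v21.
  rewrite andbT -setUA subUset.
  by apply/andP; split; apply: QX; rewrite /Q ?setU11 // setU1r ?setU11.
apply/eqP; rewrite eqEcard Btc cards2 ltnS leq_b1 andbT; apply/subsetP=> E EBt.
have /edges_inP[p [q [_ _ pq EE]]] := subsetP BtE E EBt.
have : E \subset [set u1; u2; v1; v2] by rewrite -XE QX // /Q !in_setU1 EBt !orbT.
move: EBt pq; rewrite EE subUset !sub1set !inE -!orbA.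
move=> EBt pq /andP[/or4P[]/eqP pE /or4P[]/eqP qE]; subst p q;
  rewrite ?e_irr ?(e_sym v2) ?(e_sym v1) ?(negbTE n12) ?(negbTE n21) // in pq;
  rewrite ?(setUC [set u2] [set u1]) ?(setUC [set v2] [set v1])
    ?(setUC [set v1] [set u1]) ?(setUC [set v2] [set u2]) ?eqxx ?orbT // in EBt *.
all: by [rewrite (setU1r _ EBt) in u12Q | rewrite EBt in v12Bt].
Qed.

End SimpleGraph.

Section ExtensibleGraph.
Variables (T : finType) (e : rel T) (s sbar : nat) (y : T).
Hypothesis ext : extensible e 1 s sbar.

Local Notation Y1 := (nbh1 e y).
Local Notation Y2 := (nbh2 e y).

Lemma ext_sym : symmetric e.
Proof. by case: ext => -[]. Qed.

Lemma ext_irr : irreflexive e.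
Proof. by case: ext => -[]. Qed.

Lemma sbarE : sbar = 2 * (s - 1).
Proof. by case: ext => _ _ ? _; lia. Qed.

Lemma card_Y1 : #|Y1| = 2 * s.
Proof. by case: ext => _ _ _ [/(_ y)[]]. Qed.

Lemma card_Y2 : #|Y2| = 2 * sbar.
Proof. by case: ext => _ _ _ [/(_ y)[]]. Qed.

Lemma deg_Y1_Y1 z : z \in Y1 -> #|[set w in Y1 | e z w]| = 1.
Proof. by case: ext => _ _ _ [/(_ y)[_ _ /(_ z) deg _] _ _] /deg[]. Qed.

Lemma deg_Y1_Y2 z : z \in Y1 -> #|[set w in Y2 | e z w]| = sbar.
Proof. by case: ext => _ _ _ [/(_ y)[_ _ /(_ z) deg _] _ _] /deg[]. Qed.

Lemma deg_Y2_Y2 z : z \in Y2 -> #|[set w in Y2 | e z w]| = s.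
Proof. by case: ext => _ _ _ [/(_ y)[_ _ _ /(_ z) deg] _ _] /deg[]. Qed.

Lemma common_nbr_uniq x z w1 w2 :
  e x z -> e x w1 -> e z w1 -> e x w2 -> e z w2 -> w1 = w2.
Proof.
case: ext => _ _ _ [_ /(_ x z) tri _] xz xw1 zw1 xw2 zw2.
by apply: (card_le1_eqP (eq_leq (tri xz))); rewrite inE ?xw1 ?xw2.
Qed.

Lemma nbh2P z : z \in Y2 -> z != y /\ ~~ e y z.
Proof. by rewrite !inE => /andP[/andP[]]. Qed.

Lemma nbh2_of_far z : z != y -> ~~ e y z -> z \in Y2.
Proof.
case: ext => _ [far _] _ _ zy yz; rewrite !inE zy yz.
have [w [yw wz]] : exists w, e y w /\ e w z by apply: far; rewrite // eq_sym.
by apply/existsP; exists w; rewrite yw.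
Qed.

Lemma card_edges_Y1 : #|edges_in e Y1| = s.
Proof. by have := card_matching ext_sym ext_irr deg_Y1_Y1; rewrite card_Y1; lia. Qed.

Lemma s_ge2 : 1 < s.
Proof.
(* For s = 1, Y2 is empty and Lambda is a triangle, which has diameter 1. *)
case: (ltnP 1 s) => // s_le1.
have s1 : s = 1 by case: ext => _ _ ? _; lia.
have near w : w != y -> e y w.
  move=> wy; apply: contraT => ywN; have := nbh2_of_far wy ywN.
  by rewrite (_ : Y2 = set0) ?inE //; apply/eqP; rewrite -cards_eq0 card_Y2 sbarE s1.
case: ext => _ [_ [x [z [xz xzN]]]] _ _.
have xY1 : x \in Y1.
  by rewrite inE near //; apply: contraNneq xzN => xy; rewrite xy near // -xy eq_sym.
have zY1 : z \in Y1.
  by rewrite inE near //; apply: contraNneq xzN => zy; rewrite zy ext_sym near // -zy.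
have : #|[set w in Y1 | e x w]| <= #|Y1 :\: [set x; z]|.
  apply/subset_leq_card/subsetP=> w; rewrite !inE => /andP[-> xw].
  by rewrite andbT; apply/negP=> /orP[]/eqP wE; move: xw; rewrite wE ?ext_irr // (negbTE xzN).
rewrite deg_Y1_Y1 // cardsD (setIidPr _) ?cards2 ?xz ?card_Y1 ?s1 //.
by rewrite subUset !sub1set xY1 zY1.
Qed.

Section Labelling.
Variables a' a'' : 'I_s -> T.
Hypothesis labelling : [set [set a' i; a'' i] | i : 'I_s] = edges_in e Y1.

(* The index (i, true) stands for a'_i and A'_i, the index (i, false) for
   a''_i and A''_i. *)
Definition endpoint (k : 'I_s * bool) : T := if k.2 then a' k.1 else a'' k.1.
Definition flip (k : 'I_s * bool) : 'I_s * bool := (k.1, ~~ k.2).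
Definition block (k : 'I_s * bool) : {set T} := [set z in Y2 | e (endpoint k) z].

Lemma labelled_edge i : [set a' i; a'' i] \in edges_in e Y1.
Proof. by rewrite -labelling; apply/imsetP; exists i. Qed.

Lemma endpoint_Y1 k : endpoint k \in Y1.
Proof.
case: k => i b; have := labelled_edge i.
by rewrite (pair_edges_in ext_sym ext_irr) => /and3P[]; case: b.
Qed.

Lemma endpoint_flip k : e (endpoint k) (endpoint (flip k)).
Proof.
case: k => i b; have := labelled_edge i; rewrite (pair_edges_in ext_sym ext_irr).
by case/and3P=> _ _; case: b => //=; rewrite ext_sym.
Qed.

Lemma endpoint_inj : injective endpoint.
Proof.
have pair_inj : {in predT &, injective (fun i : 'I_s => [set a' i; a'' i])}.
  by apply/imset_injP; rewrite labelling card_edges_Y1 card_ord.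
have pairE k : [set a' k.1; a'' k.1] = [set endpoint k; partner e Y1 (endpoint k)].
  have kE : endpoint k \in [set a' k.1; a'' k.1].
    by case: k => i [] /=; rewrite !inE eqxx ?orbT.
  by case: (edges_in_partner ext_sym deg_Y1_Y1 (labelled_edge k.1) kE).
case=> i b [j c] kk'.
have ij : i = j by apply: pair_inj; rewrite // (pairE (i, b)) (pairE (j, c)) kk'.
subst j; congr (_, _); apply: contraTeq (endpoint_flip (i, b)) => bc.
by rewrite (_ : flip (i, b) = (i, c)) -?kk' ?ext_irr // /flip; case: b c bc kk' => [] [].
Qed.

Lemma Y1_nbr_endpoint k w : w \in Y1 -> e (endpoint k) w -> w = endpoint (flip k).
Proof.
move=> wY1 kw; apply: (card_le1_eqP (eq_leq (deg_Y1_Y1 (endpoint_Y1 k))));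
  by rewrite inE ?wY1 ?kw ?endpoint_Y1 ?endpoint_flip.
Qed.

Lemma block_Y2 k : block k \subset Y2.
Proof. by apply/subsetP=> z; rewrite inE => /andP[]. Qed.

Lemma card_block k : #|block k| = sbar.
Proof. exact: deg_Y1_Y2 (endpoint_Y1 k). Qed.

Lemma block_flip_disjoint k : [disjoint block k & block (flip k)].
Proof.
rewrite -setI_eq0; apply/eqP/setP=> z; rewrite !inE.
apply/negbTE/negP=> /andP[/andP[/andP[/andP[+ _] _] kz] /andP[_ fz]].
have ky k' : e (endpoint k') y by have := endpoint_Y1 k'; rewrite inE ext_sym.
by apply/negP; rewrite negbK; apply/eqP; apply: (common_nbr_uniq (endpoint_flip k)).
Qed.

Lemma block_flipF k z : z \in block k -> (z \in block (flip k)) = false.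
Proof. exact: disjointFr (block_flip_disjoint k). Qed.

Lemma block_cover k : block k :|: block (flip k) = Y2.
Proof.
apply/eqP; rewrite eqEcard subUset !block_Y2 card_Y2 cardsU !card_block.
by rewrite disjoint_setI0 ?block_flip_disjoint // cards0; lia.
Qed.

Lemma block_flipE k : block (flip k) = Y2 :\: block k.
Proof.
rewrite -(block_cover k) setDUl setDv set0U; apply/esym/setDidPl.
by rewrite disjoint_sym block_flip_disjoint.
Qed.

Lemma block_deg1 k z : z \in block k -> #|[set w in block k | e z w]| = 1.
Proof.
(* These neighbours are exactly the common neighbours of z and endpoint k. *)
rewrite inE => /andP[zY2 kz]; case: ext => _ _ _ [_ /(_ _ _ kz) <- _].
apply: eq_card => w; rewrite in_set [in RHS]in_set [w \in block k]in_set.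
case kw: (e (endpoint k) w); case zw: (e z w); rewrite ?andbF //= !andbT.
have [_ yz] := nbh2P zY2.
apply: nbh2_of_far.
  by apply: contraNneq yz => wy; rewrite ext_sym -wy.
apply/negP=> yw.
have wE : w = endpoint (flip k) by apply: Y1_nbr_endpoint; rewrite ?inE.
have zk : z \in block k by rewrite inE zY2.
have : z \in block (flip k) by rewrite inE zY2 -wE ext_sym.
by rewrite (block_flipF zk).
Qed.

Lemma block_edge_unique k1 k2 u v :
  u \in block k1 -> v \in block k1 -> u \in block k2 -> v \in block k2 ->
  e u v -> k1 = k2.
Proof.
rewrite !inE => /andP[_ k1u] /andP[_ k1v] /andP[_ k2u] /andP[_ k2v] uv.
by apply: endpoint_inj; apply: (common_nbr_uniq uv); rewrite ext_sym.
Qed.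

Lemma Y2_edge_block u v : u \in Y2 -> v \in Y2 -> e u v ->
  exists k, u \in block k /\ v \in block k.
Proof.
move=> uY2 vY2 uv.
pose side i := (i, u \in block (i, true)).
have u_side i : u \in block (side i).
  rewrite /side; case: (boolP (u \in block (i, true))) => // uNi.
  by rewrite (block_flipE (i, true)) in_setD uNi uY2.
pose f i := partner e (block (side i)) u.
have fP i : f i \in block (side i) /\ e u (f i) := partnerP (@block_deg1 _) (u_side i).
have f_inj : injective f.
  move=> i j fij; have [fi ufi] := fP i; have [fj ufj] := fP j.
  have := block_edge_unique (u_side i) fi (u_side j) _ ufi.
  by rewrite fij => /(_ fj) /(congr1 fst).
have Nu : [set w in Y2 | e u w] = f @: setT.
  apply/esym/eqP; rewrite eqEcard card_imset // cardsT card_ord deg_Y2_Y2 // leqnn andbT.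
  apply/subsetP=> _ /imsetP[i _ ->]; have [fi ufi] := fP i.
  by rewrite inE ufi andbT (subsetP (block_Y2 (side i))).
have : v \in f @: setT by rewrite -Nu inE vY2.
by case/imsetP=> i _ ->; exists (side i); case: (fP i).
Qed.

Lemma Y2_triangle_free u v w : u \in Y2 -> v \in Y2 -> w \in Y2 ->
  e u v -> e v w -> e u w -> False.
Proof.
move=> uY2 vY2 wY2 uv vw uw; have [k []] := Y2_edge_block uY2 vY2 uv.
rewrite !inE => /andP[_ ku] /andP[_ kv].
have wE : w = endpoint k by apply: (common_nbr_uniq uv); rewrite // ext_sym.
by have [_] := nbh2P wY2; have := endpoint_Y1 k; rewrite inE -wE => ->.
Qed.

Lemma Y2_edge_block_unique E : E \in edges_in e Y2 -> exists! k, E \subset block k.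
Proof.
case/edges_inP=> u [v [uY2 vY2 uv ->]]; have [k [uk vk]] := Y2_edge_block uY2 vY2 uv.
exists k; split=> [|k']; rewrite subUset !sub1set ?uk ?vk //.
by case/andP=> uk' vk'; apply: (block_edge_unique uk vk uk' vk' uv).
Qed.

Lemma block_matching k :
  partition (edges_in e (block k)) (block k) /\ #|edges_in e (block k)| = s - 1.
Proof.
split; first exact: (matching_partition ext_sym ext_irr (@block_deg1 k)).
by have := card_matching ext_sym ext_irr (@block_deg1 k); rewrite card_block sbarE; lia.
Qed.

Lemma partition_Y2 i : partition [set block (i, true); block (i, false)] Y2.
Proof.
apply/and3P; split.
- by rewrite /cover bigcup_setU !big_set1 (block_cover (i, true)).
- by apply: trivIsetU; rewrite ?trivIset1 // /cover !big_set1 (block_flip_disjoint (i, true)).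
- rewrite !inE !(eq_sym set0) negb_or -!card_gt0 !card_block sbarE andbb.
  by have := s_ge2; lia.
Qed.

Lemma adj_flip_edge k u v1 v2 : u \in block k ->
  v1 \in block (flip k) -> v2 \in block (flip k) -> e v1 v2 -> e u v2 = ~~ e u v1.
Proof.
move=> uk v1f v2f v12; have uY2 := subsetP (block_Y2 k) u uk.
(* The s - 1 neighbours X of u in the opposite block are pairwise unmatched,
   as Lambda_2 has no triangle, hence a transversal of its matching. *)
pose X := [set w in block (flip k) | e u w].
have XS : X \subset block (flip k) by rewrite /X setIdE subsetIl.
have cardX : #|block (flip k)| = 2 * #|X|.
  have NuI : [set w in Y2 | e u w] :&: block k = [set w in block k | e u w].
    by rewrite !setIdE setIAC (setIidPr (block_Y2 k)).
  have NuD : [set w in Y2 | e u w] :\: block k = X.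
    by rewrite /X block_flipE !setIdE setIDAC.
  have := cardsID (block k) [set w in Y2 | e u w].
  by rewrite NuI NuD deg_Y2_Y2 // block_deg1 // card_block sbarE; lia.
have indep : {in X, forall z, partner e (block (flip k)) z \notin X}.
  move=> z; rewrite [z \in X]in_set => /andP[zf uz].
  apply/negP; rewrite in_set => /andP[pf up].
  have [_ zp] := partnerP (@block_deg1 (flip k)) zf.
  have Y2f := subsetP (block_Y2 (flip k)).
  exact: (Y2_triangle_free uY2 (Y2f _ zf) (Y2f _ pf) uz zp up).
have := transversal_partner ext_sym (@block_deg1 (flip k)) XS cardX indep v1f.
rewrite -(partner_uniq (@block_deg1 (flip k)) v1f v2f v12).
by rewrite [v2 \in X]in_set [v1 \in X]in_set v1f v2f.
Qed.

Section Crossing.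
Variables (i : 'I_s) (u1 u2 v1 v2 : T).
Hypotheses (u1i : u1 \in block (i, true)) (u2i : u2 \in block (i, true)).
Hypotheses (v1i : v1 \in block (i, false)) (v2i : v2 \in block (i, false)).
Hypotheses (u12 : e u1 u2) (v12 : e v1 v2) (u1v1 : e u1 v1).

Lemma crossing_nonadj : ~~ e u1 v2 /\ ~~ e u2 v1.
Proof.
split; first by rewrite (adj_flip_edge u1i v1i v2i v12) u1v1.
have Y2i k := subsetP (block_Y2 k).
by apply/negP=> u2v1; apply: (Y2_triangle_free (Y2i _ _ u1i) (Y2i _ _ u2i) (Y2i _ _ v1i) u12).
Qed.

Lemma crossing_adj : e u2 v2.
Proof. by rewrite (adj_flip_edge u2i v1i v2i v12) (proj2 crossing_nonadj). Qed.

Lemma crossing_uniq : uniq [:: u1; u2; v2; v1].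
Proof.
have uv a b : a \in block (i, true) -> b \in block (i, false) -> (a == b) = false.
  by move=> ai; apply: contraTF => /eqP <-; rewrite (block_flipF ai).
rewrite /= !inE !negb_or (uv u1 v2) ?(uv u1 v1) ?(uv u2 v2) ?(uv u2 v1) //= !andbT.
by rewrite (adj_neq ext_irr u12) eq_sym (adj_neq ext_irr v12).
Qed.

Lemma crossing_square (Bt : {set {set T}}) :
  [/\ Bt \subset edges_in e Y2, #|Bt| = 2 & square e ([set u1; u2] |: ([set v1; v2] |: Bt))]
  <-> Bt = [set [set u1; v1]; [set u2; v2]].
Proof.
have [n12 n21] := crossing_nonadj.
split=> [[BtE Btc sq] | ->].
  exact: (square_completed_unique ext_sym ext_irr crossing_uniq n12 n21 BtE Btc sq).
split; last exact: (square_completed ext_sym crossing_uniq u12 crossing_adj v12 u1v1).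
  have Y2i k := subsetP (block_Y2 k).
  have [u1Y2 u2Y2] := (Y2i _ _ u1i, Y2i _ _ u2i).
  have [v1Y2 v2Y2] := (Y2i _ _ v1i, Y2i _ _ v2i).
  apply/subsetP=> E; rewrite in_set2 => /orP[]/eqP->;
    by rewrite (pair_edges_in ext_sym ext_irr) ?u1Y2 ?u2Y2 ?v1Y2 ?v2Y2 ?u1v1 ?crossing_adj.
have u1N : u1 \notin [set u2; v2].
  move: crossing_uniq; rewrite /= !inE => /andP[/norP[u12N /norP[u1v2N _]]] _.
  by rewrite negb_or u12N u1v2N.
rewrite cards2; suff -> : [set u1; v1] != [set u2; v2] by [].
by apply: (contraNneq _ u1N) => <-; rewrite setU11.
Qed.

Lemma crossing_edges_split :
  exists! j : 'I_s, exists b' b'' : {set T},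
    [/\ [set [set u1; v1]; [set u2; v2]] = [set b'; b''],
        b' \subset block (j, true) & b'' \subset block (j, false)].
Proof.
have Y2i k := subsetP (block_Y2 k).
have [k [u1k v1k]] := Y2_edge_block (Y2i _ _ u1i) (Y2i _ _ v1i) u1v1.
have u2f : u2 \in block (flip k).
  rewrite block_flipE in_setD (Y2i _ _ u2i) andbT; apply/negP=> u2k.
  move: v1i; rewrite (block_edge_unique u1k u2k u1i u2i u12) in v1k.
  by rewrite (block_flipF v1k).
have v2f : v2 \in block (flip k).
  rewrite block_flipE in_setD (Y2i _ _ v2i) andbT; apply/negP=> v2k.
  move: u1i; rewrite (block_edge_unique v1k v2k v1i v2i v12) in u1k.
  by rewrite (block_flipF u1k).
have sub k' a b : a \in block k' -> b \in block k' -> [set a; b] \subset block k'.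
  by move=> ak bk; rewrite subUset !sub1set ak bk.
exists k.1; split.
  case: k u1k v1k u2f v2f => j [] u1k v1k u2f v2f.
    by exists [set u1; v1], [set u2; v2]; rewrite !sub.
  by exists [set u2; v2], [set u1; v1]; rewrite setUC !sub.
move=> j [b' [b'' [ME b'j _]]].
have : b' \in [set [set u1; v1]; [set u2; v2]] by rewrite ME setU11.
rewrite in_set2 => /orP[]/eqP b'E; move: b'j; rewrite b'E subUset !sub1set => /andP[aj bj].
  by rewrite (block_edge_unique u1k v1k aj bj u1v1).
by move/(congr1 fst): (block_edge_unique u2f v2f aj bj crossing_adj).
Qed.

End Crossing.

Lemma square_completion i (al' al'' : {set T}) :
  al' \in edges_in e (block (i, true)) -> al'' \in edges_in e (block (i, false)) ->
  (exists! Bt : {set {set T}},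
     [/\ Bt \subset edges_in e Y2, #|Bt| = 2 & square e (al' |: (al'' |: Bt))]) /\
  (forall Bt : {set {set T}},
     [/\ Bt \subset edges_in e Y2, #|Bt| = 2 & square e (al' |: (al'' |: Bt))] ->
     exists! j : 'I_s, exists b' b'' : {set T},
       [/\ Bt = [set b'; b''], b' \subset block (j, true) & b'' \subset block (j, false)]).
Proof.
case/edges_inP=> u1 [u2 [u1i u2i u12 ->]] /edges_inP[v1 [v2 [v1i v2i v12 ->]]].
wlog u1v1 : v1 v2 v1i v2i v12 / e u1 v1.
  move=> gen; case: (boolP (e u1 v1)) => [|n11]; first exact: gen.
  rewrite (setUC [set v1]); apply: gen => //; first by rewrite ext_sym.
  by rewrite (adj_flip_edge (k := (i, true)) u1i v1i v2i v12).
have sqE := crossing_square u1i u2i v1i v2i u12 v12 u1v1.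
split; last by move=> Bt /sqE ->; exact: (crossing_edges_split u1i u2i v1i v2i u12 v12 u1v1).
by exists [set [set u1; v1]; [set u2; v2]]; split=> [|Bt /sqE //]; apply/sqE.
Qed.

End Labelling.
End ExtensibleGraph.

Theorem proposition7 (T : finType) (e : rel T) (s sbar : nat) (y : T) :
  extensible e 1 s sbar ->
  let Y1 := nbh1 e y in
  let Y2 := nbh2 e y in
  (* (1) *)
  (partition (edges_in e Y1) Y1 /\ #|edges_in e Y1| = s) /\
  (forall a' a'' : 'I_s -> T,
    [set [set a' i; a'' i] | i : 'I_s] = edges_in e Y1 ->
    let A' i := [set z in Y2 | e (a' i) z] in
    let A'' i := [set z in Y2 | e (a'' i) z] in
    let B (k : 'I_s * bool) := if k.2 then A' k.1 else A'' k.1 in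
    (* (2) *)
    sbar = 2 * (s - 1) /\
    (forall i, partition [set A' i; A'' i] Y2 /\
               #|A' i| = sbar /\ #|A'' i| = sbar) /\
    (* (3) *)
    (forall u v w, u \in Y2 -> v \in Y2 -> w \in Y2 ->
       ~ (e u v /\ e v w /\ e u w)) /\
    (* (4) *)
    (forall E, E \in edges_in e Y2 -> exists! k, E \subset B k) /\
    (forall k, partition (edges_in e (B k)) (B k) /\
               #|edges_in e (B k)| = s - 1) /\
    (* (5) *)
    (forall i (al' al'' : {set T}),
       al' \in edges_in e (A' i) -> al'' \in edges_in e (A'' i) ->
       (exists! Bt : {set {set T}},
          [/\ Bt \subset edges_in e Y2, #|Bt| = 2 &
              square e (al' |: (al'' |: Bt))]) /\
       (forall Bt : {set {set T}},
          [/\ Bt \subset edges_in e Y2, #|Bt| = 2 &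
              square e (al' |: (al'' |: Bt))] ->
          exists! j : 'I_s, exists b' b'' : {set T},
            [/\ Bt = [set b'; b''], b' \subset A' j & b'' \subset A'' j]))).
Proof.
move=> ext Y1 Y2; split.
  split; last exact: (card_edges_Y1 y ext).
  exact: (matching_partition (ext_sym ext) (ext_irr ext) (deg_Y1_Y1 ext)).
move=> a' a'' lab A' A'' B.
have BE k : B k = block e y a' a'' k by case: k => i [].
split; first exact: (sbarE ext).
split.
  move=> i; split; first exact: (partition_Y2 ext lab i).
  by split; [exact: (card_block ext lab (i, true)) | exact: (card_block ext lab (i, false))].
split.
  by move=> u v w uY vY wY [uv [vw uw]]; apply: (Y2_triangle_free ext lab uY vY wY uv vw uw).
split.
  move=> E /(Y2_edge_block_unique ext lab)[k [Ek k_uniq]].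
  by exists k; split=> [|k']; rewrite BE //; apply: k_uniq.
split; first by move=> k; rewrite BE; exact: (block_matching ext lab k).
exact: (square_completion ext lab).
Qed.
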